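(* Let $\Phi$ be the set of formulas of $NOM$ and let $[\![\cdot]\!]:\Phi\to\mathcal Q$ be an interpretation into an orthomodular lattice $\mathcal Q$. If for all formulas $\phi,\psi$ we have $[\![\phi\wedge\psi]\!]=[\![\phi]\!]\wedge[\![\psi]\!]$, $[\![\phi\rightarrow\psi]\!]=[\![\phi]\!]\rightarrow[\![\psi]\!]$, and $[\![\neg\phi]\!]=\neg[\![\phi]\!]$, then all the rules of inference of $NOM$ are sound in this interpretation.
   Context: The propositional deductive system $NOM$: formulas are built from propositional letters using $\wedge$, $\rightarrow$, $\neg$. Sequents are $\phi_1,\ldots,\phi_n\vdash\psi$ ($n\ge0$) with antecedent a finite ordered sequence. With $\Gamma$ a finite possibly empty sequence of formulas and $\phi,\psi,\chi$ formulas, the rules of $NOM$ are: (assumption) $\Gamma,\phi\vdash\phi$; (cut) $\Gamma\vdash\phi$, $\Gamma,\phi\vdash\psi$ $\Rightarrow$ $\Gamma\vdash\psi$; (paste) $\Gamma\vdash\phi$, $\Gamma\vdash\psi$ $\Rightarrow$ $\Gamma,\phi\vdash\psi$; (compatible exchange) $\Gamma,\phi,\psi\vdash\phi$, $\Gamma,\phi,\psi\vdash\chi$, $\Gamma,\psi,\phi\vdash\psi$ $\Rightarrow$ $\Gamma,\psi,\phi\vdash\chi$; ($\wedge$-intro) $\Gamma\vdash\phi$, $\Gamma\vdash\psi$ $\Rightarrow$ $\Gamma\vdash\phi\wedge\psi$; ($\wedge$-elim) $\Gamma\vdash\phi\wedge\psi$ $\Rightarrow$ $\Gamma\vdash\phi$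 and $\Rightarrow$ $\Gamma\vdash\psi$; ($\rightarrow$-intro) $\Gamma,\phi\vdash\psi$ $\Rightarrow$ $\Gamma\vdash\phi\rightarrow\psi$; ($\rightarrow$-elim) $\Gamma\vdash\phi\rightarrow\psi$ $\Rightarrow$ $\Gamma,\phi\vdash\psi$; (excluded middle) $\Gamma,\phi\vdash\psi$, $\Gamma,\neg\phi\vdash\psi$ $\Rightarrow$ $\Gamma\vdash\psi$; (explosion) $\Gamma\vdash\neg\phi$ $\Rightarrow$ $\Gamma,\phi\vdash\psi$. An orthomodular lattice is a bounded lattice with an order-reversing involution $\neg$ satisfying $a\wedge\neg a=\bot$, $a\vee\neg a=\top$, and $a\le b\Rightarrow a\vee(\neg a\wedge b)=b$. In it, $a\mathbin{\&}b=(a\vee\neg b)\wedge b$ and $a\rightarrow b=\neg a\vee(a\wedge b)$; $\&$ associates to the left and $a_1\mathbin{\&}\cdots\mathbin{\&}a_n=\top$ when $n=0$. An interpretation is any function $[\![\cdot]\!]:\Phi\to\mathcal Q$ into an orthomodular lattice. A sequent $\phi_1,\ldots,\phi_n\vdash\psi$ is true in it if $[\![\phi_1]\!]\mathbin{\&}\cdots\mathbin{\&}[\![\phi_n]\!]\le[\![\psi]\!]$; a rule of inference is sound if, in every instance, its conclusion is true whenever all its premises are true. *)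

From mathcomp Require Import all_boot all_order.
Set Implicit Arguments.
Unset Strict Implicit.
Unset Printing Implicit Defensive.
Import Order.TTheory.
Local Open Scope order_scope.

Inductive form : Type :=
  | Var : nat -> form
  | And : form -> form -> form
  | Imp : form -> form -> form
  | Neg : form -> form.

Record sequent : Type := Seq { ante : seq form; succ : form }.

(** The rules of NOM, as a relation between the list of premises and the
    conclusion of each rule instance.  "Gamma, phi" is  rcons Gamma phi. *)
Inductive nom_rule : seq sequent -> sequent -> Prop :=
  | r_assumption G p :
      nom_rule [::] (Seq (rcons G p) p)
  | r_cut G p q :
      nom_rule [:: Seq G p; Seq (rcons G p) q] (Seq G q)
  | r_paste G p q :
      nom_rule [:: Seq G p; Seq G q] (Seq (rcons G p) q)
  | r_compat_exchange G p q c :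
      nom_rule [:: Seq (rcons (rcons G p) q) p;
                   Seq (rcons (rcons G p) q) c;
                   Seq (rcons (rcons G q) p) q]
               (Seq (rcons (rcons G q) p) c)
  | r_and_intro G p q :
      nom_rule [:: Seq G p; Seq G q] (Seq G (And p q))
  | r_and_elim1 G p q :
      nom_rule [:: Seq G (And p q)] (Seq G p)
  | r_and_elim2 G p q :
      nom_rule [:: Seq G (And p q)] (Seq G q)
  | r_imp_intro G p q :
      nom_rule [:: Seq (rcons G p) q] (Seq G (Imp p q))
  | r_imp_elim G p q :
      nom_rule [:: Seq G (Imp p q)] (Seq (rcons G p) q)
  | r_excluded_middle G p q :
      nom_rule [:: Seq (rcons G p) q; Seq (rcons G (Neg p)) q] (Seq G q)
  | r_explosion G p q :
      nom_rule [:: Seq G (Neg p)] (Seq (rcons G p) q).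

Record orthomodular {d : Order.disp_t} (L : tbLatticeType d) (neg : L -> L)
  : Prop := {
  om_invol : forall a, neg (neg a) = a;
  om_antitone : forall a b, a <= b -> neg b <= neg a;
  om_meet_compl : forall a, a `&` neg a = \bot;
  om_join_compl : forall a, a `|` neg a = \top;
  om_modular : forall a b, a <= b -> a `|` (neg a `&` b) = b
}.

Fixpoint inseq (S : sequent) (l : seq sequent) : Prop :=
  match l with [::] => False | T :: l' => T = S \/ inseq S l' end.

Section OMops.
Context {d : Order.disp_t} {L : tbLatticeType d} (neg : L -> L).

Definition amp (a b : L) : L := (a `|` neg b) `&` b.

Definition ompl_imp (a b : L) : L := neg a `|` (a `&` b).

Definition amp_seq (s : seq L) : L :=
  match s with
  | [::] => \top
  | a :: s' => foldl amp a s'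
  end.

Definition seq_true (I : form -> L) (S : sequent) : Prop :=
  amp_seq (map I (ante S)) <= I (succ S).

Definition nom_rules_sound (I : form -> L) : Prop :=
  forall prems concl, nom_rule prems concl ->
    (forall S, inseq S prems -> seq_true I S) -> seq_true I concl.
End OMops.

(** Everything reduces to two facts about an orthomodular lattice.  First,
    the Sasaki product is left adjoint to the Sasaki implication,
    [a & b <= c <-> a <= b -> c], which yields the rules for [->] and, via
    [b <= c -> (a & c) & b = a & b], the compatible exchange rule.  Second,
    [(p -> q) /\ (~p -> q) <= q]: with [s := (p /\ q) \/ (~p /\ q)] one has
    [s <= (p -> q) /\ (~p -> q)] and [~s /\ (p -> q) /\ (~p -> q) = \bot],
    so orthomodularity forces equality; this gives excluded middle. *)

From mathcomp Require Import all_boot all_order.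
Import Order.TTheory.
Local Open Scope order_scope.

Section OrthomodularLattice.
Context {d : Order.disp_t} {L : tbLatticeType d} {neg : L -> L}.
Hypothesis HL : orthomodular neg.

Lemma negK a : neg (neg a) = a. Proof. exact: om_invol HL a. Qed.

Lemma le_neg {a b} : a <= b -> neg b <= neg a. Proof. exact: om_antitone HL a b. Qed.

Lemma le_negE a b : (neg a <= neg b) = (b <= a).
Proof.
apply/idP/idP => [h|]; last exact: le_neg.
by rewrite -(negK a) -(negK b) le_neg.
Qed.

Lemma negU a b : neg (a `|` b) = neg a `&` neg b.
Proof.
apply: le_anti; rewrite lexI !le_neg ?leUl ?leUr //=.
rewrite -[leLHS]negK le_negE leUx.
by rewrite -{1}(negK a) -{2}(negK b) !le_negE leIl leIr.
Qed.

Lemma negI a b : neg (a `&` b) = neg a `|` neg b.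
Proof. by rewrite -[LHS]negK -[a]negK -[b]negK -negU !negK. Qed.

Lemma om_join_meet {a b} : a <= b -> a `|` (neg a `&` b) = b.
Proof. exact: om_modular HL a b. Qed.

Lemma om_meet_join {a b} : a <= b -> b `&` (neg b `|` a) = a.
Proof.
move=> /le_neg/om_join_meet; rewrite negK => e.
by rewrite -[RHS]negK -e negU negI !negK.
Qed.

Lemma eq_of_le_meet_neg0 {a b} : a <= b -> neg a `&` b = \bot -> a = b.
Proof. by move=> ab e; rewrite -(om_join_meet ab) e joinx0. Qed.

Lemma amp_le a b : amp neg a b <= b. Proof. exact: leIr. Qed.

Lemma amp_id {a b} : a <= b -> amp neg a b = a.
Proof. by move=> ab; rewrite /amp meetC joinC om_meet_join. Qed.

Lemma amp1x b : amp neg \top b = b.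
Proof. by rewrite /amp join1x meet1x. Qed.

Lemma le_amp_imp a b c : (amp neg a b <= c) = (a <= ompl_imp neg b c).
Proof.
rewrite /amp /ompl_imp; apply/idP/idP => h.
- have anb : a `|` neg b = neg b `|` (b `&` (a `|` neg b)).
    by rewrite -{3}(negK b) om_join_meet ?leUr.
  apply: le_trans (leUl a (neg b)) _.
  by rewrite anb leUx leUl /= (le_trans _ (leUr _ _)) // lexI leIl meetC.
- have bc_le : (a `|` neg b) `&` b <= (neg b `|` (b `&` c)) `&` b.
    by rewrite lexI leIr andbT (le_trans (leIl _ _)) // leUx h leUl.
  by rewrite (le_trans bc_le) // meetC om_meet_join ?leIl ?leIr.
Qed.

Lemma ompl_imp_sub b c e : c <= b ->
  ompl_imp neg b (ompl_imp neg c e) = ompl_imp neg c e.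
Proof.
move=> cb; have nb_le : neg b <= ompl_imp neg c e.
  by rewrite (le_trans (le_neg cb)) ?leUl.
by rewrite {1}/ompl_imp -{2}(negK b) (om_join_meet nb_le).
Qed.

Lemma amp_amp a b c : c <= b -> amp neg (amp neg a b) c = amp neg a c.
Proof.
move=> cb; apply/le_anti/andP; split.
- by rewrite le_amp_imp le_amp_imp ompl_imp_sub // -le_amp_imp.
- by rewrite le_amp_imp -(ompl_imp_sub _ _ _ cb) -!le_amp_imp.
Qed.

Lemma amp_amp_meet g p q : amp neg (amp neg g p) q <= p ->
  amp neg (amp neg g p) q = amp neg g (p `&` q).
Proof.
move=> h; have gpq_le : amp neg (amp neg g p) q <= p `&` q by rewrite lexI h amp_le.
by rewrite -(amp_amp g _ _ (leIl p q)) -(amp_amp _ _ _ (leIr q p)) (amp_id gpq_le).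
Qed.

Lemma meet_imp_negp_le p q :
  ompl_imp neg p q `&` ompl_imp neg (neg p) q <= q.
Proof.
rewrite /ompl_imp negK.
set A := neg p `|` (p `&` q); set B := p `|` (neg p `&` q).
set s := (p `&` q) `|` (neg p `&` q).
have s_le : s <= A `&` B.
  by rewrite lexI !leUx !leUr (le_trans (leIl p q) (leUl _ _))
             (le_trans (leIl (neg p) q) (leUl _ _)).
have eA : neg (p `&` q) `&` A = neg p.
  by have := om_meet_join (le_neg (leIl p q)); rewrite negK /A joinC.
have pB : p <= neg (neg p `&` q) by rewrite -le_negE negK leIl.
have eB : neg (neg p `&` q) `&` B = p.
  by have := om_meet_join pB; rewrite negK /B joinC.
have s0 : neg s `&` (A `&` B) = \bot.
  by rewrite /s negU meetACA eA eB meetC (om_meet_compl HL).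
by rewrite -(eq_of_le_meet_neg0 s_le s0) leUx !leIr.
Qed.

Lemma amp_cut {g p q} : g <= p -> amp neg g p <= q -> g <= q.
Proof. by move=> /amp_id ->. Qed.

Lemma amp_paste {g p q} : g <= p -> g <= q -> amp neg g p <= q.
Proof. by move=> /amp_id ->. Qed.

Lemma amp_compat_exchange {g p q c} :
  amp neg (amp neg g p) q <= p -> amp neg (amp neg g p) q <= c ->
  amp neg (amp neg g q) p <= q -> amp neg (amp neg g q) p <= c.
Proof. by move=> /amp_amp_meet -> h /amp_amp_meet ->; rewrite meetC. Qed.

Lemma amp_excluded_middle {g p q} :
  amp neg g p <= q -> amp neg g (neg p) <= q -> g <= q.
Proof.
rewrite !le_amp_imp => h1 h2.
by rewrite (le_trans _ (meet_imp_negp_le p q)) // lexI h1 h2.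
Qed.

Lemma amp_explosion {g p q} : g <= neg p -> amp neg g p <= q.
Proof.
by move=> h; rewrite /amp (join_idPr h) meetC (om_meet_compl HL) le0x.
Qed.

Lemma amp_seq_rcons s a : amp_seq neg (rcons s a) = amp neg (amp_seq neg s) a.
Proof. by case: s => [|b s] /=; rewrite ?amp1x ?foldl_rcons. Qed.

End OrthomodularLattice.

Lemma forall_inseq (P : sequent -> Prop) l :
  (forall S, inseq S l -> P S) -> foldr (fun S A => P S /\ A) True l.
Proof.
elim: l => //= S l IHl H; split; first by apply: H; left.
by apply: IHl => T lT; apply: H; right.
Qed.

Theorem theorem3p5 (d : Order.disp_t) (L : tbLatticeType d) (neg : L -> L)
  (HL : orthomodular neg) (I : form -> L)
  (Hand : forall p q, I (And p q) = I p `&` I q)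
  (Himp : forall p q, I (Imp p q) = ompl_imp neg (I p) (I q))
  (Hneg : forall p, I (Neg p) = neg (I p)) :
  nom_rules_sound neg I.
Proof.
move=> prems concl rule; case: rule
  => [G p|G p q|G p q|G p q c|G p q|G p q|G p q|G p q|G p q|G p q|G p q] /forall_inseq;
  rewrite /seq_true /= ?map_rcons ?amp_seq_rcons ?Hand ?Himp ?Hneg.
- move=> _; exact: amp_le.
- case=> h1 [h2 _]; exact: (amp_cut HL h1 h2).
- case=> h1 [h2 _]; exact: (amp_paste HL h1 h2).
- case=> h1 [h2 [h3 _]]; exact: (amp_compat_exchange HL h1 h2 h3).
- by case=> h1 [h2 _]; rewrite lexI h1 h2.
- by case=> h _; rewrite (le_trans h) ?leIl.
- by case=> h _; rewrite (le_trans h) ?leIr.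
- by case=> h _; rewrite -(le_amp_imp HL).
- by case=> h _; rewrite (le_amp_imp HL).
- case=> h1 [h2 _]; exact: (amp_excluded_middle HL h1 h2).
- case=> h _; exact: (amp_explosion HL h).
Qed.
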